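(* For every $n\ge1$, $Z(G_n)=Z(\widehat{G}_n)=t_n+1$.
   Context: Zero forcing: given a graph and a set $S$ of vertices initially colored black (all others white), repeatedly apply the rule: if a black vertex $v$ has exactly one white neighbor $u$, then $u$ becomes black. $S$ is a zero forcing set if eventually every vertex becomes black. $Z(G)$ is the minimum size of a zero forcing set of $G$. Subdivided $K_4$: the complete graph on 4 vertices $a,b,c,e$ with the edge $ab$ subdivided by a new vertex $s$ (5 vertices, edges $as, sb, ac, ae, bc, be, ce$); $s$ is its subdivision vertex. $B_d$ ($d\ge1$) is the complete binary tree with $2^d-1$ vertices and root $r$. $G_n$ ($n\ge1$): take $B_{2n-1}$ with root $r_n$, and for every leaf $\ell$ of $B_{2n-1}$ attach a new copy of the subdivided $K_4$ by identifying $\ell$ with its subdivision vertex. $\widehat{G}_n$ is obtained from $G_n$ by adding a new vertex $y_n$ adjacent only to $r_n$. $t_1=2$, $t_{n+1}=4t_n+2$ for $n\ge1$. *)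

From mathcomp Require Import all_boot.
Set Implicit Arguments. Unset Strict Implicit. Unset Printing Implicit Defensive.

(* This equals the (order-independent)
   final derived set of the forcing process. *)
Inductive black (T : finType) (e : rel T) (S : {set T}) : T -> Prop :=
| black_init x : x \in S -> black e S x
| black_force v u : black e S v -> e v u ->
    (forall w, e v w -> w != u -> black e S w) -> black e S u.

Definition zero_forcing (T : finType) (e : rel T) (S : {set T}) : Prop :=
  forall x, black e S x.

Definition is_Z (T : finType) (e : rel T) (k : nat) : Prop :=
  (exists S : {set T}, zero_forcing e S /\ #|S| = k) /\
  (forall S : {set T}, zero_forcing e S -> k <= #|S|).

(* Complete binary tree B_d (d = 2n-1): vertices 'I_(2^d - 1); vertex i has
   heap index i+1, root = 0, children of i are 2i+1 and 2i+2.
   Leaves are the vertices 2^(d-1) - 1 + k for k < 2^(d-1).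
   Gadget for leaf k: vertices (k, t), t : 'I_4, with t = 0,1,2,3 standing for
   a, b, c, e of the subdivided K4; the leaf plays the subdivision vertex s. *)
Definition tree_child (i j : nat) : bool := (j == i.*2.+1) || (j == i.*2.+2).

Definition Gvert (n : nat) : finType :=
  ('I_(2 ^ (2 * n - 1) - 1) + ('I_(2 ^ (2 * n - 2)) * 'I_4))%type.

Definition leaf_of (n : nat) (k : nat) : nat := 2 ^ (2 * n - 2) - 1 + k.

Definition Gadj (n : nat) : rel (Gvert n) := fun x y =>
  match x, y with
  | inl i, inl j => tree_child i j || tree_child j i
  | inl i, inr (k, t) => (val i == leaf_of n k) && (val t < 2)
  | inr (k, t), inl i => (val i == leaf_of n k) && (val t < 2)
  | inr (k, t), inr (k', t') =>
      [&& k == k', t != t' & ~~ ((val t < 2) && (val t' < 2))]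
  end.

(* \hat G_n: add a new vertex y_n = None adjacent only to the root r_n. *)
Definition Ghvert (n : nat) : finType := option (Gvert n).

Definition Ghadj (n : nat) : rel (Ghvert n) := fun x y =>
  match x, y with
  | Some x', Some y' => Gadj x' y'
  | None, Some (inl i) => val i == 0
  | Some (inl i), None => val i == 0
  | _, _ => false
  end.

(* t_1 = 2, t_{n+1} = 4 t_n + 2 (t 0 = 0 is an auxiliary value). *)
Fixpoint t (n : nat) : nat := if n is m.+1 then 4 * t m + 2 else 0.

From mathcomp Require Import all_boot zify.
From Stdlib Require Import Classical.
Set Implicit Arguments. Unset Strict Implicit. Unset Printing Implicit Defensive.

(* Write k = Z(G_n) = t_n + 1. The complete binary tree B_(2n+1) is a root r with
   children x, y and four grandchildren rooting copies of B_(2n-1), so G_(n+1) is r, x,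
   y and four pendant copies of G_n, two hanging from x and two from y.
   Lower bound: the black set of a copy is forced from outside only through its root,
   so every copy carries at least k - 1 initial vertices, and at least k when these
   alone force the copy (it is self forcing). Two copies under the same parent cannot
   both fail (whichever is entered first needs the other's root), and if a copy under x
   and one under y both fail, an initial vertex outside the copies is needed. Hence
   Z(G_(n+1)) >= 4k - 1, and likewise for the hat graph.
   Upper bound: with a zero forcing set R of G_n containing its root and a zero
   forcing set H of the hat graph avoiding y_n, take H in the copies 1, 3 (they force
   x and y), R minus the root in copies 0, 2, plus r (or plus the root of copy 0 in
   the hat graph): 4k - 1 vertices that again have the required shape. *)

Lemma black_closed (T : finType) (e : rel T) (S : {set T}) (C : T -> Prop) :
  (forall x, x \in S -> C x) ->
  (forall v u, C v -> e v u -> (forall w, e v w -> w != u -> C w) -> C u) ->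
  forall x, black e S x -> C x.
Proof.
move=> CS Cforce x; elim=> [y /CS //|v u _ Cv evu _ Cw].
exact: Cforce Cv evu Cw.
Qed.

Section AttachedCopy.

Variables (U V : finType) (eU : rel U) (eV : rel V) (f : U -> V) (rho : U) (p : V).
Hypotheses (eV_sym : symmetric eV) (eU_sym : symmetric eU) (f_inj : injective f).
Hypothesis f_edge : forall u w, eU u w -> eV (f u) (f w).
Hypothesis f_nbr : forall u w, eV (f u) w ->
  (exists2 w', w = f w' & eU u w') \/ (u = rho /\ w = p).

Definition copy_black (T : {set U}) (w : V) := forall u, w = f u -> black eU T u.

Lemma copy_force (T : {set U}) v u :
  copy_black T v -> (forall w, eV v w -> w != f u -> copy_black T w) ->
  eV v (f u) -> black eU T u \/ (u = rho /\ v = p).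
Proof.
move=> Tv Tw; rewrite eV_sym => /f_nbr [[v' vE eu]|]; last by right.
subst v; left; apply: (black_force (v := v')); [exact: Tv | by rewrite eU_sym |].
move=> w' ew' nw'; apply: (Tw (f w')) => //; first exact: f_edge.
by apply: contra nw' => /eqP/f_inj ->.
Qed.

Lemma black_copy_restrict (S : {set V}) (T : {set U}) :
  (forall u, f u \in S -> u \in T) -> black eU T rho ->
  forall u, black eV S (f u) -> black eU T u.
Proof.
move=> ST Trho u /(black_closed (C := copy_black T)); apply => //.
  by move=> x sS u' xE; subst x; apply/black_init/ST.
move=> v w Tv evw Tw u' wE; subst w.
by case: (copy_force Tv Tw evw) => [//|[-> _]].
Qed.

Lemma black_copy_extend (S : {set V}) (T : {set U}) :
  (forall u, u \in T -> black eV S (f u)) -> black eV S p ->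
  forall u, black eU T u -> black eV S (f u).
Proof.
move=> TS Sp u; elim=> [y /TS //|v w _ Sv evw _ Sw].
apply: (black_force (v := f v)) => [//||z]; first exact: f_edge.
case/f_nbr => [[w' -> e'] nw'|[_ -> //]].
by apply: (Sw _ e'); apply: contra nw' => /eqP ->.
Qed.

(* [eH] is [U] with a new vertex [None] attached to [rho]; in [V] that vertex is
   played by [p], the only outside neighbour of the copy. *)
Variable eH : rel (option U).
Hypotheses (eH_SS : forall a b, eH (Some a) (Some b) = eU a b)
  (eH_NS : forall b, eH None (Some b) = (b == rho))
  (eH_SN : forall a, eH (Some a) None = (a == rho)) (eH_NN : eH None None = false).
Hypothesis f_rho_p : eV (f rho) p.

Lemma black_hat_copy_extend (S : {set V}) (H : {set option U}) :
  None \notin H -> (forall u, Some u \in H -> black eV S (f u)) ->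
  forall a, black eH H a ->
    if a is Some u then black eV S (f u) else black eV S p /\ black eV S (f rho).
Proof.
move=> NH HS a; elim=> [[y /HS //|Hy]|v w _ Sv evw _ Sw]; first by rewrite Hy in NH.
case: v Sv evw Sw => [v|] Sv evw Sw; case: w evw Sw => [w|] evw Sw.
- rewrite eH_SS in evw; apply: (black_force (v := f v)) => [//||z]; first exact: f_edge.
  case/f_nbr => [[w' -> e'] nw'|[vE ->] _].
    by apply: (Sw (Some w')); rewrite ?eH_SS //; apply: contra nw' => /eqP [->].
  by case: (Sw None); rewrite // eH_SN vE.
- move: evw; rewrite eH_SN => /eqP vE; subst v; split=> //.
  apply: (black_force (v := f rho)) => // z.
  case/f_nbr => [[w' -> e'] _|[_ -> /eqP //]].
  by apply: (Sw (Some w')); rewrite ?eH_SS.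
- by move: evw; rewrite eH_NS => /eqP ->; case: Sv.
- by rewrite eH_NN in evw.
Qed.

Lemma zero_forcing_hat_copy (S : {set V}) (H : {set option U}) :
  zero_forcing eH H -> None \notin H -> (forall u, Some u \in H -> f u \in S) ->
  black eV S p /\ forall u, black eV S (f u).
Proof.
move=> zH NH HS; have ext := black_hat_copy_extend NH (fun u Hu => black_init eV (HS u Hu)).
by split=> [|u]; [case: (ext None (zH None)) | exact: (ext (Some u) (zH (Some u)))].
Qed.

End AttachedCopy.

Definition preSome (U : finType) (H : {set option U}) : {set U} := [set u | Some u \in H].

Lemma card_preSome (U : finType) (H : {set option U}) : #|preSome H| <= #|H|.
Proof.
rewrite -(card_imset _ (@Some_inj _)); apply/subset_leq_card/subsetP => a /imsetP [u].
by rewrite inE => Hu ->.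
Qed.

Definition o0 : 'I_4 := @Ordinal 4 0 isT.
Definition o1 : 'I_4 := @Ordinal 4 1 isT.
Definition o2 : 'I_4 := @Ordinal 4 2 isT.
Definition o3 : 'I_4 := @Ordinal 4 3 isT.

Lemma ord4_cases (j : 'I_4) : [\/ j = o0, j = o1, j = o2 | j = o3].
Proof.
by case: j => [[|[|[|[|//]]]] Hj]; [apply: Or41|apply: Or42|apply: Or43|apply: Or44];
  apply: val_inj.
Qed.

Lemma sum_ord4 (F : 'I_4 -> nat) : \sum_(j < 4) F j = F o0 + F o1 + F o2 + F o3.
Proof.
rewrite !big_ord_recr big_ord0 /=.
by congr (F _ + F _ + F _ + F _); apply: val_inj.
Qed.

(** * Four pendant copies below a root *)

Definition copy_parent (V : Type) (x y : V) (j : 'I_4) : V := if j < 2 then x else y.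

(* [V] is a root [r] with children [x] and [y], and four pendant copies [emb j] of
   [U] whose roots [emb j rho] hang below [x] (copies 0, 1) and [y] (copies 2, 3):
   this is how [G_(n+1)] decomposes into four copies of [G_n]. *)
Record four_copies (U V : finType) (eU : rel U) (eV : rel V) (rho : U)
    (emb : 'I_4 -> U -> V) (r x y : V) : Prop := FourCopies {
  fc_symU : symmetric eU;
  fc_symV : symmetric eV;
  fc_disj : forall j j' u u', emb j u = emb j' u' -> j = j' /\ u = u';
  fc_edge : forall j u w, eU u w -> eV (emb j u) (emb j w);
  fc_nbr : forall j u w, eV (emb j u) w ->
    (exists2 w', w = emb j w' & eU u w') \/ (u = rho /\ w = copy_parent x y j);
  fc_parent_edge : forall j, eV (copy_parent x y j) (emb j rho);
  fc_outside : forall j u, [&& emb j u != r, emb j u != x & emb j u != y];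
  fc_rx : r != x;
  fc_ry : r != y;
  fc_xr : eV x r;
  fc_yr : eV y r;
  fc_nbr_x : forall w, eV x w -> [\/ w = r, w = emb o0 rho | w = emb o1 rho];
  fc_nbr_y : forall w, eV y w -> [\/ w = r, w = emb o2 rho | w = emb o3 rho]
}.

Arguments fc_nbr [U V eU eV rho emb r x y] _ j [u w].

Lemma copy_parent_Some (V : Type) (x y : V) j :
  copy_parent (Some x) (Some y) j = Some (copy_parent x y j).
Proof. by rewrite /copy_parent; case: ifP. Qed.

Lemma four_copies_hat (U V : finType) (eU : rel U) (eV : rel V) (eH : rel (option V))
    (rho : U) (emb : 'I_4 -> U -> V) (r x y : V) :
  four_copies eU eV rho emb r x y ->
  (forall a b, eH (Some a) (Some b) = eV a b) -> (forall b, eH None (Some b) = (b == r)) ->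
  (forall a, eH (Some a) None = (a == r)) -> eH None None = false ->
  four_copies eU eH rho (fun j u => Some (emb j u)) (Some r) (Some x) (Some y).
Proof.
move=> D eH_SS eH_NS eH_SN eH_NN.
have emb_r j u : eH (Some (emb j u)) None = false.
  by rewrite eH_SN; have /and3P [/negbTE] := fc_outside D j u.
split.
- exact: fc_symU D.
- by move=> [a|] [b|]; rewrite ?eH_SS ?eH_NS ?eH_SN // (fc_symV D).
- by move=> j j' u u' [/(fc_disj D)].
- by move=> j u w euw; rewrite eH_SS; apply: (fc_edge D).
- move=> j u [w|]; rewrite ?emb_r // eH_SS copy_parent_Some.
  by case/(fc_nbr D) => [[w' -> ?]|[-> ->]]; [left; exists w' | right].
- by move=> j; rewrite copy_parent_Some eH_SS; apply: (fc_parent_edge D).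
- by move=> j u; rewrite !(inj_eq (@Some_inj _)); apply: (fc_outside D).
- by rewrite (inj_eq (@Some_inj _)); apply: (fc_rx D).
- by rewrite (inj_eq (@Some_inj _)); apply: (fc_ry D).
- by rewrite eH_SS; apply: (fc_xr D).
- by rewrite eH_SS; apply: (fc_yr D).
- move=> [w|]; last by rewrite eH_SN eq_sym (negbTE (fc_rx D)).
  by rewrite eH_SS => /(fc_nbr_x D) [->|->|->]; [apply: Or31|apply: Or32|apply: Or33].
- move=> [w|]; last by rewrite eH_SN eq_sym (negbTE (fc_ry D)).
  by rewrite eH_SS => /(fc_nbr_y D) [->|->|->]; [apply: Or31|apply: Or32|apply: Or33].
Qed.

Section FourCopies.

Variables (U V : finType) (eU : rel U) (eV : rel V) (rho : U).
Variables (emb : 'I_4 -> U -> V) (r x y : V).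
Hypothesis D : four_copies eU eV rho emb r x y.

Lemma emb_inj j : injective (emb j).
Proof. by move=> u u' /(fc_disj D) []. Qed.

Lemma emb_neq j j' u u' : j != j' -> emb j u != emb j' u'.
Proof. by apply: contra => /eqP /(fc_disj D) [-> _]. Qed.

Definition copies : {set V} := [set emb ju.1 ju.2 | ju : 'I_4 * U].

Lemma copiesP w : reflect (exists j u, w = emb j u) (w \in copies).
Proof.
apply: (iffP imsetP) => [[[j u] _ ->]|[j [u ->]]]; first by exists j, u.
by exists (j, u).
Qed.

Lemma outside_copies : [/\ r \notin copies, x \notin copies & y \notin copies].
Proof.
by split; apply/copiesP => -[j [u E]]; have /and3P [] := fc_outside D j u; rewrite E eqxx.
Qed.

Section LowerBound.

Variables (S : {set V}) (k : nat).
Hypotheses (zS : zero_forcing eV S) (Zk : forall T, zero_forcing eU T -> k <= #|T|).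

Definition pre j : {set U} := [set u | emb j u \in S].

Definition self_forcing j := zero_forcing eU (pre j).

Let copy_force_at j := copy_force (fc_symV D) (fc_symU D) (@emb_inj j) (fc_edge D j)
  (fc_nbr D j).

Let black_copy_restrict_at j := black_copy_restrict (fc_symV D) (fc_symU D)
  (@emb_inj j) (fc_edge D j) (fc_nbr D j).

Lemma pre_mem j u : (u \in pre j) = (emb j u \in S).
Proof. by rewrite inE. Qed.

Lemma pre_root_lower j : k <= #|pre j| + 1.
Proof.
have zT : zero_forcing eU (rho |: pre j).
  move=> u; apply: (@black_copy_restrict_at j S) (zS _) => [u'|].
    by rewrite in_setU1 pre_mem => ->; rewrite orbT.
  by apply: black_init; rewrite setU11.
by have := Zk zT; rewrite cardsU1; case: (_ \notin _) => /=; lia.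
Qed.

Lemma copy_root_not_black j : ~ self_forcing j -> ~ black eU (pre j) rho.
Proof.
move=> nj Trho; apply: nj => u.
by apply: (@black_copy_restrict_at j S) (zS _) => // u'; rewrite pre_mem.
Qed.

(* A copy that is not self forcing can only be entered through its root, forced by the
   parent; that needs the sibling's root black first, so two such siblings block each
   other. *)
Lemma sibling_self_forcing a b :
  a != b -> copy_parent x y a = copy_parent x y b -> self_forcing a \/ self_forcing b.
Proof.
move=> ab pab; apply: NNPP => /not_or_and [na nb].
pose C w := copy_black eU (emb a) (pre a) w /\ copy_black eU (emb b) (pre b) w.
suff Cemb w : C w by apply: na => u; apply: (Cemb (emb a u)).1.
have force c d v u : c != d -> copy_parent x y c = copy_parent x y d -> ~ self_forcing d ->
    copy_black eU (emb c) (pre c) v ->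
    (forall w, eV v w -> w != emb c u ->
       copy_black eU (emb c) (pre c) w /\ copy_black eU (emb d) (pre d) w) ->
    eV v (emb c u) -> black eU (pre c) u.
  move=> cd pcd nd Cv Cw evu.
  case: (copy_force_at Cv (fun w e n => (Cw w e n).1) evu) => [//|[-> vE]].
  case: (copy_root_not_black nd); apply: ((Cw (emb d rho) _ _).2 rho erefl).
    by rewrite vE pcd; apply: (fc_parent_edge D).
  by rewrite emb_neq // eq_sym.
apply: (black_closed (C := C)) (zS w) => [s sS|v w' Cv evw Cw].
  by split=> u sE; apply: black_init; rewrite pre_mem -sE.
split=> u wE; subst w'.
  by apply: (force a b v u ab pab nb Cv.1 Cw evw).
apply: (force b a v u _ (esym pab) na Cv.2 _ evw); first by rewrite eq_sym.
by move=> z ez nz; case: (Cw z ez nz).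
Qed.

Lemma copy_force_avoiding_root c v u :
  eV (copy_parent x y c) r -> copy_black eU (emb c) (pre c) v ->
  (forall w, eV v w -> w != emb c u -> copy_black eU (emb c) (pre c) w) ->
  (forall w, eV v w -> w != emb c u -> w \notin copies -> w = x \/ w = y) ->
  eV v (emb c u) -> black eU (pre c) u.
Proof.
move=> er Cv Cw Cout evu; case: (copy_force_at Cv Cw evu) => [//|[_ vE]].
have [rout _ _] := outside_copies; have /and3P [nr _ _] := fc_outside D c u.
by case: (Cout r); rewrite 1?eq_sym // ?vE // => /eqP;
  rewrite ?(negbTE (fc_rx D)) ?(negbTE (fc_ry D)).
Qed.

(* If [S] lies inside the copies, the only black vertices outside the copies are [x]
   and [y]: the root [r] stays white, so [x] and [y] never force into the copies. *)
Lemma not_self_forcing_cousins_outside a b :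
  copy_parent x y a = x -> copy_parent x y b = y ->
  ~ self_forcing a -> ~ self_forcing b -> exists2 s, s \in S & s \notin copies.
Proof.
move=> pa pb na nb; apply: NNPP => noout.
have Scopies s : s \in S -> s \in copies.
  by move=> sS; apply: NNPP => /negP sout; apply: noout; exists s.
pose C w := [/\ copy_black eU (emb a) (pre a) w, copy_black eU (emb b) (pre b) w &
               w \notin copies -> w = x \/ w = y].
suff Cemb w : C w by apply: na => u; case: (Cemb (emb a u)) => + _ _; apply.
apply: (black_closed (C := C)) (zS w) => [s sS|v w' Cv evw Cw].
  by split=> [u sE|u sE|]; [apply: black_init; rewrite pre_mem -sE..|rewrite Scopies].
have Cwa z ez nz := let: And3 Ca _ _ := Cw z ez nz in Ca.
have Cwb z ez nz := let: And3 _ Cb _ := Cw z ez nz in Cb.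
have Cwout z ez nz := let: And3 _ _ Co := Cw z ez nz in Co.
split=> [u wE|u wE|wout].
- subst w'; case: Cv => Cva _ _; apply: (copy_force_avoiding_root _ Cva Cwa Cwout evw).
  by rewrite pa; apply: (fc_xr D).
- subst w'; case: Cv => _ Cvb _; apply: (copy_force_avoiding_root _ Cvb Cwb Cwout evw).
  by rewrite pb; apply: (fc_yr D).
have root_neq j : emb j rho != w'.
  by apply: contraNneq wout => <-; apply/copiesP; exists j, rho.
have [/copiesP [j [u vE]]|vout] := boolP (v \in copies).
  subst v; case: (fc_nbr D j evw) => [[u' wE _]|[_ ->]].
    by case/negP: wout; apply/copiesP; exists j, u'.
  by rewrite /copy_parent; case: (j < 2); [left|right].
case: Cv => _ _ /(_ vout) [vE|vE]; subst v.
  case: (copy_root_not_black na); apply: (Cwa (emb a rho)) => //.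
  by rewrite -{1}pa; apply: (fc_parent_edge D).
case: (copy_root_not_black nb); apply: (Cwb (emb b rho)) => //.
by rewrite -{1}pb; apply: (fc_parent_edge D).
Qed.

Lemma card_split_copies : #|S| = \sum_(j < 4) #|pre j| + #|S :\: copies|.
Proof.
have emb2_inj : injective (fun ju : 'I_4 * U => emb ju.1 ju.2).
  by move=> [j u] [j' u'] /(fc_disj D) /= [-> ->].
rewrite -(cardsID copies S); congr (_ + _).
have -> : S :&: copies = [set emb ju.1 ju.2 | ju in [set ju | emb ju.1 ju.2 \in S]].
  apply/setP => w; rewrite inE; apply/andP/imsetP => [[wS /copiesP [j [u wE]]]|[ju]].
    by exists (j, u); rewrite // inE -wE.
  by rewrite inE => juS ->; split => //; apply/copiesP; exists ju.1, ju.2.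
rewrite card_imset // -sum1_card.
rewrite (eq_bigl (fun ju => emb ju.1 ju.2 \in S)) => [|ju]; last by rewrite inE.
rewrite -(pair_big_dep xpredT (fun j u => emb j u \in S) (fun _ _ => 1)) /=.
by apply: eq_bigr => j _; rewrite -sum1_card; apply: eq_bigl => u; rewrite inE.
Qed.

Lemma four_copies_lower : 4 * k <= #|S| + 1.
Proof.
have pair a b : a != b -> copy_parent x y a = copy_parent x y b ->
    2 * k <= #|pre a| + #|pre b| + 1.
  move=> ab pab; have := pre_root_lower a; have := pre_root_lower b.
  by case: (sibling_self_forcing ab pab) => /Zk; lia.
have p01 := pair o0 o1 isT erefl; have p23 := pair o2 o3 isT erefl.
rewrite card_split_copies sum_ord4.
case: (classic (self_forcing o0 /\ self_forcing o1)) => [[/Zk g0 /Zk g1]|/not_and_or n01].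
  lia.
case: (classic (self_forcing o2 /\ self_forcing o3)) => [[/Zk g2 /Zk g3]|/not_and_or n23].
  lia.
suff : 0 < #|S :\: copies| by lia.
have [a pa na] : exists2 a, copy_parent x y a = x & ~ self_forcing a.
  by case: n01; [exists o0|exists o1].
have [b pb nb] : exists2 b, copy_parent x y b = y & ~ self_forcing b.
  by case: n23; [exists o2|exists o3].
have [s sS sout] := not_self_forcing_cousins_outside pa pb na nb.
by apply/card_gt0P; exists s; rewrite inE sS sout.
Qed.

End LowerBound.

Section UpperBound.

Variables (R : {set U}) (H : {set option U}).

Definition upper_set : {set V} :=
  emb o0 @: (R :\ rho) :|: emb o1 @: preSome H :|: emb o2 @: (R :\ rho)
  :|: emb o3 @: preSome H.

Lemma upper_set_parts :
  [/\ emb o0 @: (R :\ rho) \subset upper_set, emb o1 @: preSome H \subset upper_set,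
      emb o2 @: (R :\ rho) \subset upper_set & emb o3 @: preSome H \subset upper_set].
Proof. by split; apply/subsetP => w wA; rewrite /upper_set !inE wA ?orbT. Qed.

Lemma upper_set_sub_copies : emb o0 rho |: upper_set \subset copies.
Proof.
apply/subsetP => w; rewrite in_setU1 => /predU1P [->|].
  by apply/copiesP; exists o0, rho.
by rewrite /upper_set !inE => /orP [/orP [/orP [] |] |] /imsetP [u _ ->];
  apply/copiesP; eexists; exists u.
Qed.

Hypothesis rhoR : rho \in R.

Lemma card_upper_set : #|upper_set| <= 2 * (#|R| - 1) + 2 * #|H|.
Proof.
have cR j : #|emb j @: (R :\ rho)| = (#|R| - 1).
  by rewrite card_imset; [rewrite (cardsD1 rho R) rhoR; lia | exact: emb_inj].
have cH j : #|emb j @: preSome H| <= #|H|.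
  exact: leq_trans (leq_imset_card _ _) (card_preSome H).
rewrite /upper_set; set A0 := emb o0 @: _; set A1 := emb o1 @: _.
set A2 := emb o2 @: _; set A3 := emb o3 @: _.
have := (leq_card_setU (A0 :|: A1 :|: A2) A3).1; have := (leq_card_setU (A0 :|: A1) A2).1.
have := (leq_card_setU A0 A1).1; have : #|A0| = (#|R| - 1) := cR o0.
have : #|A2| = (#|R| - 1) := cR o2; have : #|A1| <= #|H| := cH o1.
have : #|A3| <= #|H| := cH o3; lia.
Qed.

Lemma card_upper_setU1 (z : V) k : #|R| <= k -> #|H| <= k -> #|z |: upper_set| <= 4 * k - 1.
Proof.
have R0 : 0 < #|R| by apply/card_gt0P; exists rho.
by rewrite cardsU1; have := card_upper_set; have := leq_b1 (z \notin upper_set); lia.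
Qed.

Variable eH : rel (option U).
Hypotheses (eH_SS : forall a b, eH (Some a) (Some b) = eU a b)
  (eH_NS : forall b, eH None (Some b) = (b == rho))
  (eH_SN : forall a, eH (Some a) None = (a == rho)) (eH_NN : eH None None = false).
Hypotheses (zR : zero_forcing eU R) (zH : zero_forcing eH H) (NH : None \notin H).

Lemma hat_copy_black (S : {set V}) j : emb j @: preSome H \subset S ->
  black eV S (copy_parent x y j) /\ forall u, black eV S (emb j u).
Proof.
move=> HS; apply: (zero_forcing_hat_copy (fc_edge D j) (fc_nbr D j) eH_SS eH_NS eH_SN
  eH_NN _ zH NH) => [|u Hu]; first by rewrite (fc_symV D) (fc_parent_edge D).
by apply: (subsetP HS); apply: imset_f; rewrite inE.
Qed.

Lemma rooted_copy_black (S : {set V}) j : emb j @: (R :\ rho) \subset S ->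
  black eV S (emb j rho) -> black eV S (copy_parent x y j) -> forall u, black eV S (emb j u).
Proof.
move=> RS Srho Sp u; apply: (black_copy_extend (fc_edge D j) (fc_nbr D j) _ Sp (zR u)).
move=> u' Ru'.
have [->//|nu'] := eqVneq u' rho.
by apply/black_init/(subsetP RS)/imset_f; rewrite !inE nu'.
Qed.

Lemma upper_set_black (S : {set V}) : upper_set \subset S ->
  [/\ black eV S x, black eV S y, forall u, black eV S (emb o1 u)
     & forall u, black eV S (emb o3 u)].
Proof.
move=> US; have [_ sub1 _ sub3] := upper_set_parts.
have [bx b1] := hat_copy_black (subset_trans sub1 US).
have [byy b3] := hat_copy_black (subset_trans sub3 US).
by split.
Qed.

Lemma zero_forcing_upper_G :
  (forall v, v \notin copies -> [\/ v = r, v = x | v = y]) ->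
  zero_forcing eV (r |: upper_set).
Proof.
move=> cover; set S := r |: upper_set.
have US : upper_set \subset S := subsetUr _ _.
have [sub0 _ sub2 _] := upper_set_parts; have [bx byy b1 b3] := upper_set_black US.
have br : black eV S r by apply/black_init/setU11.
have b0r : black eV S (emb o0 rho).
  apply: (black_force (v := x)) bx (fc_parent_edge D o0) _ => w.
  by case/(fc_nbr_x D) => ->; rewrite ?eqxx.
have b2r : black eV S (emb o2 rho).
  apply: (black_force (v := y)) byy (fc_parent_edge D o2) _ => w.
  by case/(fc_nbr_y D) => ->; rewrite ?eqxx.
have b0 := rooted_copy_black (subset_trans sub0 US) b0r bx.
have b2 := rooted_copy_black (subset_trans sub2 US) b2r byy.
move=> v; have [/copiesP [j [u ->]]|/cover [->|->|->] //] := boolP (v \in copies).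
by case: (ord4_cases j) => ->.
Qed.

Lemma zero_forcing_upper_hat (z : V) :
  (forall v, v \notin copies -> [\/ v = r, v = x, v = y | v = z]) ->
  (forall w, eV r w -> [\/ w = x, w = y | w = z]) -> eV r z ->
  zero_forcing eV (emb o0 rho |: upper_set).
Proof.
move=> cover nbr_r erz; set S := emb o0 rho |: upper_set.
have US : upper_set \subset S := subsetUr _ _.
have [sub0 _ sub2 _] := upper_set_parts; have [bx byy b1 b3] := upper_set_black US.
have b0r : black eV S (emb o0 rho) by apply/black_init/setU11.
have b0 := rooted_copy_black (subset_trans sub0 US) b0r bx.
have br : black eV S r.
  apply: (black_force (v := x)) bx (fc_xr D) _ => w.
  by case/(fc_nbr_x D) => ->; rewrite ?eqxx.
have bz : black eV S z.
  by apply: (black_force (v := r)) br erz _ => w; case/nbr_r => ->; rewrite ?eqxx.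
have b2r : black eV S (emb o2 rho).
  apply: (black_force (v := y)) byy (fc_parent_edge D o2) _ => w.
  by case/(fc_nbr_y D) => ->; rewrite ?eqxx.
have b2 := rooted_copy_black (subset_trans sub2 US) b2r byy.
move=> v; have [/copiesP [j [u ->]]|/cover [->|->|->|->] //] := boolP (v \in copies).
by case: (ord4_cases j) => ->.
Qed.

End UpperBound.

End FourCopies.

(** * Heap indices of [G_n] *)

Definition nleaves (n : nat) := 2 ^ (2 * n).

Lemma nleaves_gt0 n : 0 < nleaves n. Proof. by rewrite expn_gt0. Qed.

Lemma nleavesS n : nleaves n.+1 = 4 * nleaves n.
Proof. by rewrite /nleaves mulnS expnD. Qed.

Lemma expn_tree n : 2 ^ (2 * n.+1 - 1) = 2 * nleaves n.
Proof. by rewrite /nleaves -expnS; congr (2 ^ _); lia. Qed.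

Lemma expn_leaves n : 2 ^ (2 * n.+1 - 2) = nleaves n.
Proof. by rewrite /nleaves; congr (2 ^ _); lia. Qed.

Lemma leaf_ofE n k : leaf_of n.+1 k = nleaves n - 1 + k.
Proof. by rewrite /leaf_of expn_leaves. Qed.

Definition depth (i : nat) := trunc_log 2 i.+1.

Lemma depthP i : 2 ^ depth i <= i.+1 < 2 ^ (depth i).+1.
Proof. exact: trunc_log_bounds. Qed.

Lemma depth_eq i d : 2 ^ d <= i.+1 < 2 ^ d.+1 -> depth i = d.
Proof. exact: trunc_log_eq. Qed.

Lemma depth_child i c : c < 2 -> depth (i.*2 + c).+1 = (depth i).+1.
Proof.
move=> c2; apply: depth_eq; have /andP [lo hi] := depthP i.
by rewrite !expnS in hi *; apply/andP; split; lia.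
Qed.

(* Heap index, in the tree with two more levels, of vertex [i] of the subtree
   rooted at the grandchild [3 + j] of the root. *)
Definition graft (j i : nat) := i + (3 + j) * 2 ^ depth i.

Lemma graft0 j : graft j 0 = 3 + j.
Proof. by rewrite /graft /depth trunc_log1 muln1. Qed.

Lemma graft_ge3 j i : 3 <= graft j i.
Proof. by rewrite /graft; have := expn_gt0 2 (depth i); nia. Qed.

Lemma depth_graft j i : j < 4 -> depth (graft j i) = (depth i).+2.
Proof.
move=> j4; apply: depth_eq; have /andP [lo hi] := depthP i.
rewrite /graft !expnS in hi *; set p := 2 ^ depth i in lo hi *.
by apply/andP; split; nia.
Qed.

Lemma graft_child j i c : c < 2 -> graft j (i.*2 + c).+1 = (graft j i).*2 + c.+1.
Proof. by move=> c2; rewrite /graft depth_child // expnS; lia. Qed.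

Lemma graft_inj j j' i i' : j < 4 -> j' < 4 -> graft j i = graft j' i' -> j = j' /\ i = i'.
Proof.
move=> j4 j'4 E.
have dE : depth i = depth i'.
  by apply/succn_inj/succn_inj; rewrite -(depth_graft i j4) -(depth_graft i' j'4) E.
move: E; rewrite /graft -dE; have := depthP i; have := depthP i'; rewrite -dE expnS.
set p := 2 ^ depth i => /andP [h1 h2] /andP [h3 h4].
move: j4 j'4; case: j => [|[|[|[|//]]]]; case: j' => [|[|[|[|//]]]] _ _ E; lia.
Qed.

Lemma depth_leq i d : (depth i <= d) = (i.+1 < 2 ^ d.+1).
Proof.
have /andP [lo hi] := depthP i; apply/idP/idP => [le|lt].
  by apply: leq_trans hi _; rewrite leq_exp2l.
by rewrite -ltnS -(ltn_exp2l _ _ (isT : 1 < 2)); apply: leq_ltn_trans lt.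
Qed.

Lemma graft_lt n j i : j < 4 -> ((graft j i).+1 < 8 * nleaves n) = (i.+1 < 2 * nleaves n).
Proof.
move=> j4; have E2 : 2 * nleaves n = 2 ^ (2 * n).+1 by rewrite expnS.
have E8 : 8 * nleaves n = 2 ^ (2 * n).+3 by rewrite !expnS !mulnA.
by rewrite E2 E8 -!depth_leq depth_graft.
Qed.

Lemma depth_leaf n k : k < nleaves n -> depth (nleaves n - 1 + k) = 2 * n.
Proof.
move=> kP; apply: depth_eq; have := nleaves_gt0 n.
by rewrite expnS -/(nleaves n); lia.
Qed.

Lemma graft_leaf n j k : k < nleaves n ->
  graft j (nleaves n - 1 + k) = 4 * nleaves n - 1 + (j * nleaves n + k).
Proof.
move=> kP; rewrite /graft depth_leaf // -/(nleaves n); have := nleaves_gt0 n; nia.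
Qed.

Lemma graft_leafP n j i k' : j < 4 -> k' < 4 * nleaves n ->
  graft j i = 4 * nleaves n - 1 + k' ->
  exists2 k, k < nleaves n & i = nleaves n - 1 + k /\ k' = j * nleaves n + k.
Proof.
move=> j4 k'lt E; have P0 := nleaves_gt0 n.
have : depth (graft j i) = (2 * n.+1) by rewrite E -nleavesS depth_leaf // nleavesS.
rewrite depth_graft // mulnS => -[dE].
have /andP [lo hi] := depthP i; rewrite dE expnS -/(nleaves n) in lo hi.
exists (i.+1 - nleaves n); first lia.
have iE : i = nleaves n - 1 + (i.+1 - nleaves n) by lia.
by split=> //; move: E; rewrite {1}iE graft_leaf; lia.
Qed.

Lemma graft_surj n m : 3 <= m -> m.+1 < 8 * nleaves n ->
  exists j i, [/\ j < 4, i.+1 < 2 * nleaves n & m = graft j i].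
Proof.
move=> m3 mlt; have := depthP m; have : 2 <= depth m by rewrite ltnNge depth_leq; lia.
move: (depth m) => D D2; rewrite -(subnKC D2) !expnS; set p := 2 ^ (D - 2) => /andP [lo hi].
have p0 : 0 < p by rewrite expn_gt0.
have mE := divn_eq m.+1 p; have rlt := ltn_pmod m.+1 p0.
set q := m.+1 %/ p in mE; set rm := m.+1 %% p in mE rlt.
have q4 : 4 <= q < 8 by apply/andP; split; nia.
have j4 : q - 4 < 4 by lia.
have di : depth (rm + p - 1) = D - 2 by apply: depth_eq; rewrite expnS -/p; lia.
have mG : m = graft (q - 4) (rm + p - 1) by rewrite /graft di -/p; nia.
by exists (q - 4), (rm + p - 1); rewrite -(graft_lt n _ j4) -mG.
Qed.

Lemma tree_childP i m : reflect (exists2 c, c < 2 & m = (i.*2 + c).+1) (tree_child i m).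
Proof.
apply: (iffP orP) => [[] /eqP ->|[[|[|//]] _ ->]].
- by exists 0; rewrite ?addn0.
- by exists 1; rewrite ?addn1.
- by left; rewrite addn0.
- by right; rewrite addn1.
Qed.

Lemma tree_child_graft j i i' : tree_child i i' -> tree_child (graft j i) (graft j i').
Proof.
by case/tree_childP => c c2 ->; apply/tree_childP; exists c; rewrite ?graft_child ?addnS.
Qed.

Lemma graft_tree_child j i m : tree_child (graft j i) m ->
  exists2 c, c < 2 & m = graft j (i.*2 + c).+1.
Proof. by case/tree_childP => c c2 ->; exists c; rewrite ?graft_child ?addnS. Qed.

Lemma graft_tree_parent j i m : j < 4 -> tree_child m (graft j i) ->
  (i = 0 /\ m = (j./2).+1) \/ exists2 q, m = graft j q & tree_child q i.
Proof.
move=> j4 /tree_childP [c c2 E]; case: i E => [|i] E.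
  by left; split=> //; move: E j4 c2; rewrite graft0; case: j => [|[|[|[|//]]]] /=; lia.
have iE : i.+1 = (i./2.*2 + odd i).+1 by rewrite addnC odd_double_half.
right; exists i./2; last by apply/tree_childP; exists (odd i); [case: odd|].
move: E; rewrite iE graft_child; [lia | by case: odd].
Qed.

Lemma tree_vert_lt n i : (i < 2 ^ (2 * n.+1 - 1) - 1) = (i.+1 < 2 * nleaves n).
Proof. by rewrite expn_tree; have := nleaves_gt0 n; lia. Qed.

Lemma tree_vert_lt2 n i : (i < 2 ^ (2 * n.+2 - 1) - 1) = (i.+1 < 8 * nleaves n).
Proof. by rewrite tree_vert_lt nleavesS mulnA. Qed.

Lemma leaf_vert_lt n k : (k < 2 ^ (2 * n.+1 - 2)) = (k < nleaves n).
Proof. by rewrite expn_leaves. Qed.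

Lemma leaf_vert_lt2 n k : (k < 2 ^ (2 * n.+2 - 2)) = (k < 4 * nleaves n).
Proof. by rewrite leaf_vert_lt nleavesS. Qed.

Section Embedding.

Variable n : nat.

Lemma graft_vert_lt (j : 'I_4) (i : 'I_(2 ^ (2 * n.+1 - 1) - 1)) :
  graft j i < 2 ^ (2 * n.+2 - 1) - 1.
Proof. by rewrite tree_vert_lt2 graft_lt // -tree_vert_lt. Qed.

Lemma block_vert_lt (j : 'I_4) (k : 'I_(2 ^ (2 * n.+1 - 2))) :
  j * nleaves n + k < 2 ^ (2 * n.+2 - 2).
Proof.
by rewrite leaf_vert_lt2; have := ltn_ord k; have := ltn_ord j; rewrite leaf_vert_lt; nia.
Qed.

(* Gadget [k] of copy [j] becomes gadget [j * nleaves n + k], the one attached to the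
   image of its leaf (see [graft_leaf]). *)
Definition emb (j : 'I_4) (u : Gvert n.+1) : Gvert n.+2 :=
  match u with
  | inl i => inl (Ordinal (graft_vert_lt j i))
  | inr (k, t) => inr (Ordinal (block_vert_lt j k), t)
  end.

End Embedding.

Lemma top_vert_lt n i : i < 3 -> i < 2 ^ (2 * n.+2 - 1) - 1.
Proof. by rewrite tree_vert_lt2; have := nleaves_gt0 n; lia. Qed.

Lemma root_vert_lt n : 0 < 2 ^ (2 * n.+1 - 1) - 1.
Proof. by rewrite tree_vert_lt; have := nleaves_gt0 n; lia. Qed.

Definition rootv n : Gvert n.+1 := inl (Ordinal (root_vert_lt n)).
Definition xv n : Gvert n.+2 := inl (Ordinal (top_vert_lt n (isT : 1 < 3))).
Definition yv n : Gvert n.+2 := inl (Ordinal (top_vert_lt n (isT : 2 < 3))).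

Lemma tree_ordP n q : q.+1 < 2 * nleaves n -> q < 2 ^ (2 * n.+1 - 1) - 1.
Proof. by rewrite tree_vert_lt. Qed.

Lemma leaf_ordP n k : k < nleaves n -> k < 2 ^ (2 * n.+1 - 2).
Proof. by rewrite leaf_vert_lt. Qed.

Lemma Gadj_sym n : symmetric (@Gadj n).
Proof.
move=> [i|[k t]] [i'|[k' t']] //=; first exact: orbC.
by rewrite [k' == k]eq_sym [t' == t]eq_sym [(t' < 2) && _]andbC.
Qed.

Section EmbeddingProperties.

Variable n : nat.

Lemma emb_edge (j : 'I_4) (u w : Gvert n.+1) : Gadj u w -> Gadj (emb j u) (emb j w).
Proof.
have [j4 leaf] := (ltn_ord j, leaf_ofE n.+1); rewrite nleavesS in leaf.
case: u => [i|[k t]]; case: w => [i'|[k' t']] /=.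
- by case/orP => /(tree_child_graft j) ->; rewrite ?orbT.
- case/andP => /eqP iE ->; rewrite andbT leaf iE leaf_ofE graft_leaf //.
  by rewrite -leaf_vert_lt.
- case/andP => /eqP iE ->; rewrite andbT leaf iE leaf_ofE graft_leaf //.
  by rewrite -leaf_vert_lt.
- by case/and3P => /eqP -> -> ->; rewrite eqxx.
Qed.

Lemma emb_disj (j j' : 'I_4) (u u' : Gvert n.+1) :
  emb j u = emb j' u' -> j = j' /\ u = u'.
Proof.
case: u => [i|[k t]]; case: u' => [i'|[k' t']] //= [].
  by case/graft_inj => // /val_inj -> /val_inj ->.
move=> E ->; have := ltn_ord k; have := ltn_ord k'.
rewrite !leaf_vert_lt => kP k'P.
have jE : j = j' :> nat by have := ltn_ord j; have := ltn_ord j'; nia.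
move: E; rewrite jE => /addnI kE.
by split; [apply: val_inj | congr (inr (_, _)); apply: val_inj].
Qed.

Lemma emb_nbr_tree (j : 'I_4) (i : 'I_(2 ^ (2 * n.+1 - 1) - 1)) (w : Gvert n.+2) :
  Gadj (emb j (inl i)) w ->
  (exists2 w', w = emb j w' & Gadj (inl i) w') \/
  (inl i = rootv n /\ w = copy_parent (xv n) (yv n) j).
Proof.
have j4 := ltn_ord j; have iP : i.+1 < 2 * nleaves n by rewrite -tree_vert_lt.
case: w => [m|[k' t']] /=; last first.
  case/andP => /eqP iE t2; have k'P : k' < 4 * nleaves n by rewrite -leaf_vert_lt2.
  rewrite leaf_ofE nleavesS in iE; have [k kP [iE' kE]] := graft_leafP j4 k'P iE.
  left; exists (inr (Ordinal (leaf_ordP kP), t')); first by congr (inr (_, _)); apply: val_inj.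
  by rewrite /= leaf_ofE -iE' eqxx.
have mP : m.+1 < 8 * nleaves n by rewrite -tree_vert_lt2.
case/orP => [/graft_tree_child [c c2 mE]|/(graft_tree_parent j4) [[i0 mE]|[q mE qi]]].
- have cP : (i.*2 + c).+2 < 2 * nleaves n by rewrite -(graft_lt n _ j4) -mE.
  left; exists (inl (Ordinal (tree_ordP cP))); first by congr inl; apply: val_inj.
  by rewrite /= (_ : tree_child _ _) //; apply/tree_childP; exists c.
- right; split; first by congr inl; apply: val_inj.
  by case: (ord4_cases j) mE => -> mE; congr inl; apply: val_inj.
- have qP : q.+1 < 2 * nleaves n by case/tree_childP: qi => c _ iE; lia.
  left; exists (inl (Ordinal (tree_ordP qP))); first by congr inl; apply: val_inj.
  by rewrite /= qi orbT.
Qed.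

Lemma emb_nbr (j : 'I_4) (u : Gvert n.+1) (w : Gvert n.+2) :
  Gadj (emb j u) w ->
  (exists2 w', w = emb j w' & Gadj u w') \/ (u = rootv n /\ w = copy_parent (xv n) (yv n) j).
Proof.
case: u => [i|[k t]]; first exact: emb_nbr_tree.
have kP : k < nleaves n by rewrite -leaf_vert_lt.
case: w => [m|[k' t']] /=.
  case/andP => /eqP mE t2; have lP : (nleaves n - 1 + k).+1 < 2 * nleaves n by lia.
  left; exists (inl (Ordinal (tree_ordP lP))).
    by congr inl; apply: val_inj; rewrite /= mE leaf_ofE nleavesS graft_leaf.
  by rewrite /= leaf_ofE eqxx.
case/and3P => /eqP kE tt' tt2; left; exists (inr (k, t')).
  by congr (inr (_, _)); apply: val_inj; rewrite /= -kE.
by rewrite /= eqxx tt' tt2.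
Qed.

Lemma emb_parent_edge (j : 'I_4) : Gadj (copy_parent (xv n) (yv n) j) (emb j (rootv n)).
Proof. by case: (ord4_cases j) => ->. Qed.

Lemma emb_outside (j : 'I_4) (u : Gvert n.+1) :
  [&& emb j u != rootv n.+1, emb j u != xv n & emb j u != yv n].
Proof.
case: u => [i|[k t]] //=; have := graft_ge3 j i.
by rewrite /rootv /xv /yv !(inj_eq inl_inj) -!val_eqE /=; lia.
Qed.

Lemma leaf_of_ge3 k : 3 <= leaf_of n.+2 k.
Proof. by rewrite leaf_ofE nleavesS; have := nleaves_gt0 n; lia. Qed.

Lemma xv_nbr (w : Gvert n.+2) : Gadj (xv n) w ->
  [\/ w = rootv n.+1, w = emb o0 (rootv n) | w = emb o1 (rootv n)].
Proof.
case: w => [[m mP]|[k t]] /=; last by case/andP => /eqP mE; have := leaf_of_ge3 k; lia.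
rewrite /tree_child /=; case: m mP => [|[|[|[|[|//]]]]] // mP _;
  [apply: Or31|apply: Or32|apply: Or33]; congr inl; exact: val_inj.
Qed.

Lemma yv_nbr (w : Gvert n.+2) : Gadj (yv n) w ->
  [\/ w = rootv n.+1, w = emb o2 (rootv n) | w = emb o3 (rootv n)].
Proof.
case: w => [[m mP]|[k t]] /=; last by case/andP => /eqP mE; have := leaf_of_ge3 k; lia.
rewrite /tree_child /=; case: m mP => [|[|[|[|[|[|[|//]]]]]]] // mP _;
  [apply: Or31|apply: Or32|apply: Or33]; congr inl; exact: val_inj.
Qed.

Lemma Gvert_cover (v : Gvert n.+2) :
  v \notin copies (@emb n) -> [\/ v = rootv n.+1, v = xv n | v = yv n].
Proof.
move=> vout; case: v vout => [m|[k t]]; last first.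
  case/copiesP; have kP : k < 4 * nleaves n by rewrite -leaf_vert_lt2.
  have P0 := nleaves_gt0 n; have j4 : k %/ nleaves n < 4 by rewrite ltn_divLR // mulnC.
  have kmP : k %% nleaves n < nleaves n by rewrite ltn_pmod.
  exists (Ordinal j4), (inr (Ordinal (leaf_ordP kmP), t)).
  by congr (inr (_, _)); apply: val_inj; apply: divn_eq.
case: (ltnP m 3) => [|m3 /copiesP []].
  by case: m => [[|[|[|//]]] mP] _ _; [apply: Or31|apply: Or32|apply: Or33];
    congr inl; apply: val_inj.
have mP : m.+1 < 8 * nleaves n by rewrite -tree_vert_lt2.
have [j [i [j4 iP mE]]] := graft_surj m3 mP.
by exists (Ordinal j4), (inl (Ordinal (tree_ordP iP))); congr inl; apply: val_inj.
Qed.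

Lemma G_four_copies : four_copies (@Gadj n.+1) (@Gadj n.+2) (rootv n) (@emb n)
  (rootv n.+1) (xv n) (yv n).
Proof.
split=> //; [exact: Gadj_sym | exact: Gadj_sym | exact: emb_disj | exact: emb_edge |
  exact: emb_nbr | exact: emb_parent_edge | exact: emb_outside | exact: xv_nbr |
  exact: yv_nbr].
Qed.

End EmbeddingProperties.

Lemma Ghadj_SS n (a b : Gvert n) : Ghadj (Some a) (Some b) = Gadj a b.
Proof. by case: a => [?|[? ?]]; case: b => [?|[? ?]]. Qed.

Lemma Ghadj_NS n (b : Gvert n.+1) : Ghadj None (Some b) = (b == rootv n).
Proof. by case: b => [i|[k t]] //=; rewrite /rootv (inj_eq inl_inj) -val_eqE. Qed.

Lemma Ghadj_SN n (a : Gvert n.+1) : Ghadj (Some a) None = (a == rootv n).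
Proof. by case: a => [i|[k t]] //=; rewrite /rootv (inj_eq inl_inj) -val_eqE. Qed.

Definition hemb n (j : 'I_4) (u : Gvert n.+1) : Ghvert n.+2 := Some (emb j u).

Lemma Gh_four_copies n : four_copies (@Gadj n.+1) (@Ghadj n.+2) (rootv n) (@hemb n)
  (Some (rootv n.+1)) (Some (xv n)) (Some (yv n)).
Proof.
exact: four_copies_hat (G_four_copies n) (@Ghadj_SS n.+2) (@Ghadj_NS n.+1)
  (@Ghadj_SN n.+1) erefl.
Qed.

Lemma Ghvert_cover n (v : Ghvert n.+2) : v \notin copies (@hemb n) ->
  [\/ v = Some (rootv n.+1), v = Some (xv n), v = Some (yv n) | v = None].
Proof.
case: v => [v|_]; last exact: Or44.
move=> vout; have /Gvert_cover [->|->|->] : v \notin copies (@emb n);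
  [|exact: Or41|exact: Or42|exact: Or43].
by apply: contra vout => /copiesP [j [u ->]]; apply/copiesP; exists j, u.
Qed.

Lemma Ghroot_nbr n (w : Ghvert n.+2) : Ghadj (Some (rootv n.+1)) w ->
  [\/ w = Some (xv n), w = Some (yv n) | w = None].
Proof.
case: w => [[[m mP]|[k t]]|_]; last exact: Or33.
  rewrite /= /tree_child /=; case: m mP => [|[|[|//]]] // mP _;
    [apply: Or31|apply: Or32]; congr (Some (inl _)); exact: val_inj.
by rewrite /= => /andP [/eqP mE]; have := leaf_of_ge3 n k; lia.
Qed.

(** * The base case [G_1] *)

Section ForcingClosure.

Variables (T : finType) (e : rel T) (L : seq T).
Hypothesis L_all : forall v, v \in L.

(* The vertices are enumerated by the explicit list [L] rather than by finite sets,
   which are locked and do not evaluate under [vm_compute]. *)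
Definition force_step (A : seq T) : seq T :=
  A ++ [seq u <- L | has (fun v =>
    [&& v \in A, e v u & all (fun w => e v w ==> (w \in A) || (w == u)) L]) L].

Lemma force_step_black (S : {set T}) (A : seq T) m :
  {subset A <= S} -> forall x, x \in iter m force_step A -> black e S x.
Proof.
move=> AS; elim: m => [|m IHm] x /=; first by move/AS; apply: black_init.
rewrite mem_cat mem_filter => /orP [/IHm //|/andP [/hasP [v _ /and3P [/IHm Sv evx]]]].
move/allP => Sw _; apply: (black_force (v := v)) => // w evw nwx.
by have /implyP/(_ evw)/orP [/IHm //|/eqP wx] := Sw w (L_all w); rewrite wx eqxx in nwx.
Qed.

Lemma zero_forcing_iter (S : {set T}) (A : seq T) m :
  {subset A <= S} -> all (mem (iter m force_step A)) L -> zero_forcing e S.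
Proof. by move=> AS /allP itL x; apply: (force_step_black AS (itL x (L_all x))). Qed.

Definition forcing_closed (A : pred T) :=
  all (fun v => A v ==> all (fun u => (e v u && ~~ A u) ==>
    has (fun w => [&& e v w, ~~ A w & w != u]) L) L) L.

Lemma forcing_closed_black (S : {set T}) (A : pred T) : {subset S <= A} ->
  forcing_closed A -> forall x, black e S x -> A x.
Proof.
move=> SA /allP clA; apply: (black_closed (C := A)) => [x /SA //|v u Av evu Aw].
apply: contraT => uA; have /implyP/(_ Av)/allP/(_ u (L_all u)) := clA v (L_all v).
by rewrite evu uA => /hasP [w _ /and3P [evw wA /(Aw w evw)]]; rewrite (negbTE wA).
Qed.

Lemma zero_forcing_ge3 (a b c d : T) : uniq [:: a; b; c; d] ->
  forcing_closed (predC (pred2 a b)) -> forcing_closed (predC (pred2 c d)) ->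
  (forall p q, p \in [:: a; b] -> q \in [:: c; d] -> forcing_closed (pred2 p q)) ->
  forall S, zero_forcing e S -> 3 <= #|S|.
Proof.
move=> abcd clab clcd clpq S zS.
have meet (A : pred T) z : A z -> forcing_closed (predC A) -> exists2 p, p \in S & A p.
  move=> Az clA; apply/exists_inP; apply: contraT; rewrite negb_exists_in => /forall_inP SA.
  by have := forcing_closed_black SA clA (zS z); rewrite /= Az.
have [p pS pab] : exists2 p, p \in S & pred2 a b p by apply: (meet _ a); rewrite /= ?eqxx.
have [q qS qcd] : exists2 q, q \in S & pred2 c d q by apply: (meet _ c); rewrite /= ?eqxx.
rewrite leqNgt; apply/negP => S2.
have pq : p != q.
  move: abcd pab qcd; rewrite /= !inE !negb_or => /and4P [/and3P [_ ac ad] /andP [bc bd] _ _].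
  by case/orP => /eqP -> /orP [] /eqP ->.
have SE : S = [set p; q].
  by apply/esym/eqP; rewrite eqEcard cards2 pq -ltnS S2 andbT; apply/subsetP => z;
    rewrite !inE => /orP [] /eqP ->.
have all_pq z : z \in [set p; q].
  rewrite !inE; apply: (forcing_closed_black (A := pred2 p q)) (zS z).
    by move=> w; rewrite SE !inE.
  by apply: clpq; rewrite !inE.
have sub : [:: a; b; c; d] \subset [set p; q] by apply/subsetP => z _.
by have := subset_leq_card sub; rewrite (card_uniqP abcd) cards2 pq.
Qed.

End ForcingClosure.

Definition gadget1 (t : 'I_4) : Gvert 1 := inr (Ordinal (isT : 0 < 2 ^ (2 * 1 - 2)), t).

Definition G1_enum : seq (Gvert 1) :=
  [:: rootv 0; gadget1 o0; gadget1 o1; gadget1 o2; gadget1 o3].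

Lemma G1_enum_all v : v \in G1_enum.
Proof.
by case: v => [[[|//] i0]|[[[|//] k0] t]] //; case: (ord4_cases t) => ->.
Qed.

Lemma G1_lower S : zero_forcing (@Gadj 1) S -> 3 <= #|S|.
Proof.
apply: (zero_forcing_ge3 G1_enum_all (a := gadget1 o0) (b := gadget1 o1)
  (c := gadget1 o2) (d := gadget1 o3)); try by vm_compute.
by move=> p q; rewrite !inE => /orP [] /eqP -> /orP [] /eqP ->; vm_compute.
Qed.

Definition G1hat_enum : seq (Ghvert 1) := None :: map Some G1_enum.

Lemma G1hat_enum_all v : v \in G1hat_enum.
Proof. by case: v => [v|//]; rewrite inE map_f ?orbT ?G1_enum_all. Qed.

Lemma G1hat_lower S : zero_forcing (@Ghadj 1) S -> 3 <= #|S|.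
Proof.
apply: (zero_forcing_ge3 G1hat_enum_all (a := Some (gadget1 o0)) (b := Some (gadget1 o1))
  (c := Some (gadget1 o2)) (d := Some (gadget1 o3))); try by vm_compute.
by move=> p q; rewrite !inE => /orP [] /eqP -> /orP [] /eqP ->; vm_compute.
Qed.

Lemma G1_upper : exists2 R, zero_forcing (@Gadj 1) R & rootv 0 \in R /\ #|R| <= 3.
Proof.
pose A := [:: rootv 0; gadget1 o0; gadget1 o2].
exists [set v in A]; last by rewrite inE mem_head cardsE card_size.
by apply: (zero_forcing_iter G1_enum_all (A := A) (m := 2)) => [v|]; rewrite ?inE //; vm_compute.
Qed.

Lemma G1hat_upper : exists2 H, zero_forcing (@Ghadj 1) H & None \notin H /\ #|H| <= 3.
Proof.
pose A := [:: Some (gadget1 o0); Some (gadget1 o2); Some (gadget1 o3)].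
exists [set v in A]; last by rewrite inE cardsE card_size.
by apply: (zero_forcing_iter G1hat_enum_all (A := A) (m := 3)) => [v|]; rewrite ?inE //; vm_compute.
Qed.

(** * Induction *)

(* Besides the value of [Z], the induction carries a zero forcing set of [G_n]
   containing the root and one of the hat graph avoiding [y_n]: these are the pieces
   the constructions for [n + 1] are made of. *)
Definition zero_forcing_bounds n :=
  [/\ forall S, zero_forcing (@Gadj n.+1) S -> (t n.+1).+1 <= #|S|,
      forall S, zero_forcing (@Ghadj n.+1) S -> (t n.+1).+1 <= #|S|,
      exists2 R, zero_forcing (@Gadj n.+1) R & rootv n \in R /\ #|R| <= (t n.+1).+1 &
      exists2 H, zero_forcing (@Ghadj n.+1) H & None \notin H /\ #|H| <= (t n.+1).+1].

Lemma zero_forcing_bounds0 : zero_forcing_bounds 0.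
Proof. by split; [exact: G1_lower | exact: G1hat_lower | exact: G1_upper | exact: G1hat_upper]. Qed.

Lemma zero_forcing_boundsS n : zero_forcing_bounds n -> zero_forcing_bounds n.+1.
Proof.
case=> lowG lowH [R zR [rhoR cR]] [H zH [NH cH]].
have tS : (t n.+2).+1 = 4 * (t n.+1).+1 - 1.
  by have -> : t n.+2 = 4 * t n.+1 + 2 by []; lia.
split; rewrite tS.
- by move=> S zS; have := four_copies_lower (G_four_copies n) zS lowG; lia.
- by move=> S zS; have := four_copies_lower (Gh_four_copies n) zS lowG; lia.
- exists (rootv n.+1 |: upper_set (rootv n) (@emb n) R H).
    exact: (zero_forcing_upper_G (G_four_copies n) (@Ghadj_SS n.+1) (@Ghadj_NS n)
      (@Ghadj_SN n) erefl zR zH NH (@Gvert_cover n)).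
  by rewrite setU11; split=> //; apply: (card_upper_setU1 (G_four_copies n)).
- exists (hemb o0 (rootv n) |: upper_set (rootv n) (@hemb n) R H).
    exact: (zero_forcing_upper_hat (Gh_four_copies n) (@Ghadj_SS n.+1) (@Ghadj_NS n)
      (@Ghadj_SN n) erefl zR zH NH (@Ghvert_cover n) (@Ghroot_nbr n) erefl).
  split; last by apply: (card_upper_setU1 (Gh_four_copies n)).
  by apply/negP => /(subsetP (upper_set_sub_copies _ _ _ _)) /copiesP [j [u]].
Qed.

Theorem proposition1 (n : nat) :
  1 <= n -> is_Z (@Gadj n) (t n).+1 /\ is_Z (@Ghadj n) (t n).+1.
Proof.
case: n => [//|n] _.
have [lowG lowH [R zR [_ cR]] [H zH [_ cH]]] : zero_forcing_bounds n.
  by elim: n => [|n IHn]; [exact: zero_forcing_bounds0 | exact: zero_forcing_boundsS].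
split; split=> //.
- by exists R; split=> //; apply/eqP; rewrite eqn_leq cR lowG.
- by exists H; split=> //; apply/eqP; rewrite eqn_leq cH lowH.
Qed.
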